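(* Let $\mathcal{G}_{55}$ be the network described in the context, with nodes $(i,j)$, $1\le i,j\le5$. Let $X$ be the set of nodes $\{(1,1),(2,2),(3,3),(4,4),(5,5),(1,4),(2,1),(3,5),(4,3),(5,2)\}$, and let $K$ be the 2-coloring in which nodes in $X$ have one color and all other 15 nodes have a second color. Then $K$ is balanced, but $K$ is not an orbit coloring for $\mathbb{S}_5\times\mathbb{S}_5$, i.e. there is no subgroup $\Sigma\subseteq\mathbb{S}_5\times\mathbb{S}_5$ whose orbits on the nodes are exactly the two color classes of $K$.
   Context: For integers $m,n\ge1$, the network $\mathcal{G}_{mn}$ has node set $\{(i,j):1\le i\le m,\ 1\le j\le n\}$ ($i$ indexes rows, $j$ columns), all nodes of the same type. For each ordered pair of distinct nodes $(c,d)$ there is exactly one arrow with head $c$ and tail $d$, whose type is: ''row'' if $c,d$ lie in the same row, ''column'' if they lie in the same column, ''diagonal'' otherwise; in addition each node has an internal arrow from itself to itself (a fourth type). The group $\mathbb{S}_m\times\mathbb{S}_n$ acts on the nodes by $(\sigma,\tau)\cdot(i,j)=(\sigma(i),\tau(j))$; it is the symmetry group of $\mathcal{G}_{mn}$. A coloring is a map from nodes to a set of colors (identified up to the partition it induces). A coloring is balanced if whenever nodes $c,d$ have the same color, for every arrow type and every color $k$ the number of input arrows of that type to $c$ with tail of color $k$ equals the corresponding number for $d$. For a subgroup $\Sigma$ of the symmetry group, the orbit coloring of $\Sigma$ has as color classes the $\Sigma$-orbits on nodes; a coloring is an orbit coloring if it is the orbit coloring of some such subgroup. *)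

From HB Require Import structures.
From mathcomp Require Import all_boot all_order all_fingroup.
Set Implicit Arguments. Unset Strict Implicit. Unset Printing Implicit Defensive.

(* Nodes of G_{mn}: (i,j) with i a row index in 'I_m, j a column index in 'I_n
   (0-indexed: paper's (i,j) is (i-1,j-1) here). *)
Definition node (m n : nat) := ('I_m * 'I_n)%type.

Inductive atype := Row | Col | Diag | Intr.

Definition atype_eqb (a b : atype) : bool :=
  match a, b with
  | Row, Row | Col, Col | Diag, Diag | Intr, Intr => true
  | _, _ => false
  end.

Lemma atype_eqP : Equality.axiom atype_eqb.
Proof. by case; case; constructor. Qed.

HB.instance Definition _ := hasDecEq.Build atype atype_eqP.

(* Type of the unique arrow with head c and tail d (internal if c = d). *)
Definition arrow_type m n (c d : node m n) : atype :=
  if c == d then Intr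
  else if c.1 == d.1 then Row
  else if c.2 == d.2 then Col
  else Diag.

Definition in_count m n (C : eqType) (col : node m n -> C)
    (c : node m n) (t : atype) (k : C) : nat :=
  #|[set d : node m n | (arrow_type c d == t) && (col d == k)]|.

Definition balanced m n (C : eqType) (col : node m n -> C) : Prop :=
  forall c d : node m n, col c = col d ->
    forall (t : atype) (k : C), in_count col c t k = in_count col d t k.

Definition symG m n := ({perm 'I_m} * {perm 'I_n})%type.

Definition act m n (g : symG m n) (c : node m n) : node m n :=
  (g.1 c.1, g.2 c.2).

Definition orbit_coloring m n (C : eqType) (col : node m n -> C) : Prop :=
  exists Sigma : {group symG m n},
    forall c d : node m n,
      (exists2 g, g \in Sigma & act g c = d) <-> col c = col d.

Definition X55 : {set node 5 5} :=
  [set c : node 5 5 |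
    (nat_of_ord c.1, nat_of_ord c.2) \in
      [:: (0,0); (1,1); (2,2); (3,3); (4,4); (0,3); (1,0); (2,4); (3,2); (4,1)]].

Definition K55 (c : node 5 5) : bool := c \in X55.

From Pilot Require Import Defs.
From mathcomp Require Import all_boot all_order all_fingroup.

Set Implicit Arguments.
Unset Strict Implicit.
Unset Printing Implicit Defensive.

(* Every row and every column of the grid meets X in exactly two nodes.  Hence
   the number of row (resp. column) inputs of a given color to a node depends
   only on the node's own color, and so do the internal inputs; the diagonal
   inputs are what remains of the total number of nodes of that color.
   A symmetry preserving the colors maps a rectangle with three corners in X
   to another such rectangle.  The node (1,3) is the fourth corner of the
   rectangle with corners (1,4), (4,4), (4,3) in X, whereas (1,5), also outside
   X, is the fourth corner of no such rectangle; so no color-preserving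
   symmetry maps (1,3) to (1,5), and the color class outside X is not an
   orbit.  With 0-based indices these two nodes are (0,2) and (0,4). *)

Section Balance.

Variables (m n : nat) (C : eqType) (col : node m n -> C).

Definition row_count (i : 'I_m) (k : C) := #|[set j | col (i, j) == k]|.

Definition column_count (j : 'I_n) (k : C) := #|[set i | col (i, j) == k]|.

Definition color_count (k : C) := #|[set d | col d == k]|.

Lemma arrow_type_Intr (c d : node m n) : (arrow_type c d == Intr) = (d == c).
Proof.
rewrite /arrow_type (eq_sym c d); case: (eqVneq d c) => // _.
by case: ifP => //; case: ifP.
Qed.

Lemma in_count_Intr c k : in_count col c Intr k = (col c == k).
Proof.
rewrite /in_count; case ck: (col c == k).
  rewrite (_ : [set d | _] = [set c]) ?cards1 //; apply/setP=> d.
  by rewrite !inE arrow_type_Intr; case: (eqVneq d c) => // ->.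
rewrite (_ : [set d | _] = set0) ?cards0 //; apply/setP=> d.
by rewrite !inE arrow_type_Intr; case: (eqVneq d c) => // ->.
Qed.

Lemma in_count_Row c k :
  in_count col c Row k + (col c == k) = row_count c.1 k.
Proof.
case: c => i j /=.
rewrite /in_count (_ : [set d | _] = setX [set i] ([set j' | col (i, j') == k] :\ j)).
  by rewrite cardsX cards1 mul1n /row_count (cardsD1 j [set j' | _]) inE addnC.
apply/setP=> -[i' j']; rewrite !inE /arrow_type xpair_eqE /= [i' == i]eq_sym [j' == j]eq_sym.
by case: (eqVneq i i') => [<-|_]; case: (eqVneq j j') => [<-|_]; rewrite ?andbT ?andbF.
Qed.

Lemma in_count_Col c k :
  in_count col c Col k + (col c == k) = column_count c.2 k.
Proof.
case: c => i j /=.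
rewrite /in_count (_ : [set d | _] = setX ([set i' | col (i', j) == k] :\ i) [set j]).
  by rewrite cardsX cards1 muln1 /column_count (cardsD1 i [set i' | _]) inE addnC.
apply/setP=> -[i' j']; rewrite !inE /arrow_type xpair_eqE /= [i' == i]eq_sym [j' == j]eq_sym.
by case: (eqVneq i i') => [<-|_]; case: (eqVneq j j') => [<-|_]; rewrite ?andbT ?andbF.
Qed.

Lemma in_count_total c k :
  in_count col c Row k + in_count col c Col k + in_count col c Intr k
    + in_count col c Diag k = color_count k.
Proof.
rewrite /in_count /color_count -!sum1dep_card.
rewrite !(big_mkcond (fun d => _ && _)) [RHS]big_mkcond -!big_split.
apply: eq_bigr => d _ /=.
by case: (arrow_type c d); case: (col d == k).
Qed.

Lemma balanced_of_uniform_lines :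
  (forall i i' k, row_count i k = row_count i' k) ->
  (forall j j' k, column_count j k = column_count j' k) ->
  balanced col.
Proof.
move=> rows_eq cols_eq c d cd.
have in_count_eq t k : t != Diag -> in_count col c t k = in_count col d t k.
  case: t => // _.
  - by apply/(@addIn (col c == k)); rewrite {2}cd !in_count_Row; apply: rows_eq.
  - by apply/(@addIn (col c == k)); rewrite {2}cd !in_count_Col; apply: cols_eq.
  - by rewrite !in_count_Intr cd.
case=> k; try by rewrite in_count_eq.
apply: (@addnI (in_count col c Row k + in_count col c Col k + in_count col c Intr k)).
by rewrite in_count_total !in_count_eq // in_count_total.
Qed.

End Balance.

Section Rectangles.

Variables (m n : nat) (C : eqType) (col : node m n -> C).

Definition preserves_coloring (g : symG m n) := forall c, col (Defs.act g c) = col c.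

Lemma orbit_coloring_transitive c d :
  orbit_coloring col -> col c = col d ->
  exists2 g, preserves_coloring g & Defs.act g c = d.
Proof.
case=> Sigma orbitsE /orbitsE [g Sg gc]; exists g => // e.
by apply/esym/orbitsE; exists g.
Qed.

Definition completes_rectangle (k : C) (c : node m n) :=
  [exists d, [&& col d == k, col (c.1, d.2) == k & col (d.1, c.2) == k]].

Lemma completes_rectangle_act g k c :
  preserves_coloring g -> completes_rectangle k c ->
  completes_rectangle k (Defs.act g c).
Proof.
move=> g_col /existsP[d]; rewrite -[col d]g_col -[col (c.1, d.2)]g_col.
by rewrite -[col (d.1, c.2)]g_col => corners; apply/existsP; exists (Defs.act g d).
Qed.

Lemma not_orbit_coloring_of_rectangle k c d :
  col c = col d -> completes_rectangle k c -> ~~ completes_rectangle k d ->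
  ~ orbit_coloring col.
Proof.
move=> cd c_rect d_rect /orbit_coloring_transitive/(_ cd)[g g_col gc].
by move: d_rect; rewrite -gc completes_rectangle_act.
Qed.

End Rectangles.

Lemma K55E c :
  K55 c = ((c.1 : nat, c.2 : nat) \in
    [:: (0, 0); (1, 1); (2, 2); (3, 3); (4, 4); (0, 3); (1, 0); (2, 4); (3, 2); (4, 1)]).
Proof. by rewrite /K55 inE. Qed.

Lemma K55_row_count i k : row_count K55 i k = if k then 2 else 3.
Proof.
rewrite /row_count cardsE cardE /enum_mem size_filter -enumT.
rewrite !enum_ordSl enum_ord0 /= !unfold_in /= !K55E.
by case: k; case: i => [[|[|[|[|[|?]]]]] ?].
Qed.

Lemma K55_column_count j k : column_count K55 j k = if k then 2 else 3.
Proof.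
rewrite /column_count cardsE cardE /enum_mem size_filter -enumT.
rewrite !enum_ordSl enum_ord0 /= !unfold_in /= !K55E.
by case: k; case: j => [[|[|[|[|[|?]]]]] ?].
Qed.

Lemma K55_completes_rectangle_02 : completes_rectangle K55 true (inord 0, inord 2).
Proof. by apply/existsP; exists (inord 3, inord 3); rewrite /= !K55E /= !inordK. Qed.

Lemma K55_not_completes_rectangle_04 : ~~ completes_rectangle K55 true (inord 0, inord 4).
Proof.
apply/existsPn=> -[i j]; rewrite /= !K55E /= !inordK //.
by case: i j => [[|[|[|[|[|?]]]]] ?] [[|[|[|[|[|?]]]]] ?].
Qed.

Theorem mainTheorem3 : balanced K55 /\ ~ orbit_coloring K55.
Proof.
split.
  apply: balanced_of_uniform_lines => [i i' k | j j' k].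
    by rewrite !K55_row_count.
  by rewrite !K55_column_count.
apply: (not_orbit_coloring_of_rectangle _ K55_completes_rectangle_02
                                          K55_not_completes_rectangle_04).
by rewrite !K55E /= !inordK.
Qed.
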